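(* Let $r\ge 2$. Then $\mathscr{Z}^{\rm TAR}(K_{1,r})\cong K_{1,r}\,\square\,K_2$. Furthermore, $\overline{\operatorname{Z}}(K_{1,r})=\operatorname{Z}(K_{1,r})=r-1$ and $z_0(K_{1,r})=\underline{z_0}(K_{1,r})=r$.
   Context: Zero forcing on a graph $G$: starting with a set $S$ of blue vertices (others white), a blue vertex $v$ may change a white vertex $w$ to blue if $w$ is the only white neighbor of $v$. $S$ is a zero forcing set if repeated application colors all of $V(G)$ blue. $\operatorname{Z}(G)$ is the minimum size of a zero forcing set, $\overline{\operatorname{Z}}(G)$ the maximum size of a minimal (under inclusion) zero forcing set. $\mathscr{Z}^{\rm TAR}(G)$ has vertices the zero forcing sets of $G$, two adjacent iff their symmetric difference has size 1; $\mathscr{Z}^{\rm TAR}_k(G)$ is its subgraph induced by zero forcing sets of size at most $k$. $\underline{z_0}(G)$ is the least $k$ with $\mathscr{Z}^{\rm TAR}_k(G)$ connected; $z_0(G)$ is the least $k$ such that $\mathscr{Z}^{\rm TAR}_i(G)$ is connected for every $i=k,\dots,|V(G)|$. $K_{1,r}$ is the star with $r$ leaves; $\square$ denotes the Cartesian product of graphs. *)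

From mathcomp Require Import all_boot.
Set Implicit Arguments. Unset Strict Implicit. Unset Printing Implicit Defensive.

Section ZeroForcing.
Variables (T : finType) (e : rel T).

(* One round of the color change rule, applied to every possible force:
   w becomes blue if some blue v adjacent to w has all its neighbours other
   than w blue (i.e. w is the only white neighbour of v). *)
Definition zf_step (B : {set T}) : {set T} :=
  B :|: [set w | [exists v in B,
                   e v w && [forall u, e v u ==> (u == w) || (u \in B)]]].

(* Final coloring obtained from S: |T| rounds suffice (each round either
   stabilises or adds a vertex). *)
Definition zf_closure (S : {set T}) : {set T} := iter #|T| zf_step S.

Definition zero_forcing (S : {set T}) : bool := zf_closure S == setT.

(* Z(G): minimum size of a zero forcing set (V(G) itself is zero forcing). *)
Definition Zn : nat := \big[minn/#|T|]_(S : {set T} | zero_forcing S) #|S|.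

Definition Zbar : nat :=
  \max_(S : {set T} | minset zero_forcing S) #|S|.

Definition TARv := {S : {set T} | zero_forcing S}.

Definition symdiff (A B : {set T}) : {set T} := (A :\: B) :|: (B :\: A).

Definition TAR_rel : rel TARv :=
  fun A B => #|symdiff (val A) (val B)| == 1.

Definition induced_connected (U : finType) (f : rel U) (P : pred U) : bool :=
  [exists x, P x] &&
  [forall x, forall y, P x ==> P y ==>
    connect (fun a b => [&& P a, P b & f a b]) x y].

Definition TARk_connected (k : nat) : bool :=
  induced_connected TAR_rel (fun A : TARv => #|val A| <= k).

Definition z0_low : nat :=
  \big[minn/#|T|]_(k < #|T|.+1 | TARk_connected k) (k : nat).

Definition z0 : nat :=
  \big[minn/#|T|]_(k < #|T|.+1 |
     [forall i : 'I_#|T|.+1, (k <= i) ==> TARk_connected i]) (k : nat).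

End ZeroForcing.

Definition isomorphic (U W : finType) (f : rel U) (g : rel W) : Prop :=
  exists h : U -> W, bijective h /\ forall x y, f x y = g (h x) (h y).

(* Star K_{1,r}: center None, leaves Some i (i < r). *)
Definition star (r : nat) : rel (option 'I_r) :=
  fun x y => (x == None) != (y == None).

Definition K2 : rel bool := fun a b => a != b.

Definition cartprod (A B : finType) (eA : rel A) (eB : rel B) : rel (A * B) :=
  fun x y => ((x.1 == y.1) && eB x.2 y.2) || ((x.2 == y.2) && eA x.1 y.1).
Arguments star r : clear implicits.
Arguments TAR_rel {T} e.
Arguments Zn {T} e.
Arguments Zbar {T} e.
Arguments z0 {T} e.
Arguments z0_low {T} e.

From HB Require Import structures.
From mathcomp Require Import all_boot zify.
Set Implicit Arguments. Unset Strict Implicit. Unset Printing Implicit Defensive.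

(* Any two leaves of K_{1,r} are twins, so two white leaves can never be
   forced; conversely, if at most one leaf is white, a blue leaf forces the
   centre and the centre forces the last leaf.  Hence the zero forcing sets
   are coded by a pair (missing leaf or none, centre in or out).  Two such sets
   differ in exactly one vertex iff their codes are adjacent in K_{1,r} □ K_2.
   The smallest zero forcing sets, of size r - 1, are the r sets missing one
   leaf and the centre: they are the minimal ones and are pairwise
   non-adjacent, while the set of all leaves (size r) is adjacent or at
   distance two to every zero forcing set of size at most r. *)

Section ZeroForcing.
Variables (T : finType) (e : rel T).

Lemma zf_step_force (B : {set T}) v w :
  v \in B -> e v w -> (forall u, e v u -> u != w -> u \in B) -> w \in zf_step e B.
Proof.
move=> vB vw others; rewrite !inE; apply/orP; right.
apply/existsP; exists v; rewrite vB vw; apply/forallP => u; apply/implyP => vu.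
by case: eqVneq => //= /(others _ vu).
Qed.

Lemma subset_iter_zf_step n (B : {set T}) : B \subset iter n (zf_step e) B.
Proof.
elim: n => [|n IH] /=; first exact: subxx.
exact: subset_trans IH (subsetUl _ _).
Qed.

Lemma zero_forcing_iter n (S : {set T}) :
  n <= #|T| -> iter n (zf_step e) S = setT -> zero_forcing e S.
Proof.
move=> le_n full; rewrite /zero_forcing /zf_closure -(subnK le_n) iterD full.
by rewrite eqEsubset subsetT subset_iter_zf_step.
Qed.

Lemma zf_step_twins_white (B : {set T}) w w' :
  w != w' -> (forall v, e v w = e v w') -> w \notin B -> w' \notin B ->
  w \notin zf_step e B.
Proof.
move=> neq twins wB w'B; rewrite !inE negb_or wB /=.
apply/existsP => -[v /and3P [_ vw /forallP /(_ w')]].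
by rewrite -twins vw (negbTE w'B) orbF eq_sym (negbTE neq).
Qed.

Lemma zero_forcing_twins (S : {set T}) w w' :
  zero_forcing e S -> w != w' -> (forall v, e v w = e v w') ->
  (w \in S) || (w' \in S).
Proof.
move=> zfS neq twins; apply/contraT; rewrite negb_or => /andP [wS w'S].
have white n : (w \notin iter n (zf_step e) S) && (w' \notin iter n (zf_step e) S).
  elim: n => [|n /andP [wn w'n]] /=; first by rewrite wS w'S.
  apply/andP; split; first exact: zf_step_twins_white neq twins wn w'n.
  by apply: zf_step_twins_white w'n wn; rewrite 1?eq_sym // => v; rewrite twins.
by have := white #|T|; rewrite -/(zf_closure e S) (eqP zfS) !inE.
Qed.

End ZeroForcing.

Section InducedConnectivity.
Variables (U : finType) (f : rel U) (P : pred U).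
Local Notation fP := (fun a b => [&& P a, P b & f a b]).

Lemma induced_connected_hub c :
  symmetric f -> P c -> (forall x, P x -> connect fP x c) -> induced_connected f P.
Proof.
move=> fsym Pc to_c; apply/andP; split; first by apply/existsP; exists c.
have fPsym : connect_sym fP.
  by apply: sym_connect_sym => a b; rewrite fsym; case: (P a); case: (P b).
apply/forallP => x; apply/forallP => y; apply/implyP => Px; apply/implyP => Py.
by apply: connect_trans (to_c x Px) _; rewrite fPsym; apply: to_c.
Qed.

Lemma induced_disconnected_isolated x y :
  P x -> P y -> x != y -> (forall z, P z -> ~~ f x z) -> ~~ induced_connected f P.
Proof.
move=> Px Py xy isolated; apply/negP => /andP [_ /forallP /(_ x) /forallP /(_ y)].
rewrite Px Py => /connectP [[|z p] /=]; first by move=> _ yx; rewrite yx eqxx in xy.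
by case/andP => /and3P [_ Pz]; rewrite (negbTE (isolated z Pz)).
Qed.

End InducedConnectivity.

HB.instance Definition _ := SemiGroup.isComLaw.Build nat minn minnA minnC.

Lemma bigmin_eq (I : finType) (P : pred I) (F : I -> nat) d i :
  P i -> (forall j, P j -> F i <= F j) -> F i <= d ->
  \big[minn/d]_(j | P j) F j = F i.
Proof.
move=> Pi Fi_min Fi_d; rewrite (bigD1 i) //; apply/minn_idPl.
by elim/big_ind: _ => // [m n|j /andP [/Fi_min]] //; rewrite leq_min => -> ->.
Qed.

Lemma bigmin_ord_ge n m d :
  m < n -> m <= d -> \big[minn/d]_(k < n | m <= k) (k : nat) = m.
Proof. by move=> lt_mn le_md; rewrite (bigmin_eq (i := Ordinal lt_mn)). Qed.

Lemma card_option_set (T : finType) (A : {set option T}) :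
  #|A| = (None \in A) + #|[set x | Some x \in A]|.
Proof.
rewrite (cardD1 None) -(card_imset _ (@Some_inj _)); congr (_ + _).
apply: eq_card => -[x|]; rewrite !inE /=.
  by rewrite (mem_imset _ _ (@Some_inj _)) inE.
by apply/esym/negbTE/imsetP => -[].
Qed.

Lemma in_symdiff (T : finType) (A B : {set T}) x :
  (x \in symdiff A B) = ((x \in A) != (x \in B)).
Proof. by rewrite !inE; case: (x \in A); case: (x \in B). Qed.

Section Star.
Variable r : nat.
Hypothesis r_gt1 : 1 < r.
Local Notation V := (option 'I_r).
Local Notation K := (star r).

(* A code [(a, b)] stands for the set of all vertices except the leaf [a]
   (no leaf is missing when [a = None]), containing the centre iff [b]. *)
Definition star_zfset (p : option 'I_r * bool) : {set V} :=
  [set x | if x is Some _ then x != p.1 else p.2].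

Definition star_code (S : {set V}) : option 'I_r * bool :=
  ([pick i | Some i \notin S], None \in S).

Definition star_zfcard (p : option 'I_r * bool) : nat := p.2 + (r - (p.1 != None)).

Let leaf0 : 'I_r := Ordinal (ltnW r_gt1).
Let leaf1 : 'I_r := Ordinal r_gt1.

Lemma star_zfsetK : cancel star_zfset star_code.
Proof.
case=> a b; rewrite /star_code inE /=; congr (_, _).
case: pickP => [i | none]; first by rewrite inE negbK => /eqP.
by case: a none => // i /(_ i); rewrite inE negbK eqxx.
Qed.

Lemma star_codeK (S : {set V}) : zero_forcing K S -> star_zfset (star_code S) = S.
Proof.
move=> zfS; apply/setP => -[i|]; rewrite inE //=.
case: pickP => [j jS | all_in] /=; last by move/negbFE: (all_in i) ->.
have [-> | ij] := eqVneq i j; first by rewrite eqxx (negbTE jS).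
have := zero_forcing_twins (w := Some i) (w' := Some j) zfS.
by rewrite (negbTE jS) orbF inj_eq ?ij //; [move=> -> | exact: Some_inj].
Qed.

Lemma zero_forcing_star_zfset p : zero_forcing K (star_zfset p).
Proof.
set S := star_zfset p.
have grow (B : {set V}) : B \subset zf_step K B := subsetUl _ _.
have centre : None \in zf_step K S.
  have [l lS] : exists l : 'I_r, Some l != p.1.
    case: (eqVneq (Some leaf0) p.1) => [<- | ?]; last by exists leaf0.
    by exists leaf1.
  by apply: (zf_step_force (v := Some l)); rewrite ?inE // => -[].
apply: (zero_forcing_iter (n := 2)); first by rewrite card_option card_ord ltnS ltnW.
apply/eqP; rewrite eqEsubset subsetT /=; apply/subsetP => -[i|] _ /=; last first.
  exact: (subsetP (grow _)).
have [iS | iNS] := boolP (Some i \in S).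
  by apply/(subsetP (grow _))/(subsetP (grow _)).
apply: (zf_step_force (v := None)) => // -[j|] // _ ji.
apply/(subsetP (grow _)); rewrite inE /=.
by move: iNS; rewrite inE negbK => /eqP <-.
Qed.

Lemma card_star_zfset p : #|star_zfset p| = star_zfcard p.
Proof.
case: p => a b; rewrite card_option_set inE /star_zfcard /=; congr (_ + _).
case: a => [j|] /=.
  rewrite subn1 -[X in X.-1](card_ord r) -(cardsC1 j).
  by apply: eq_card => i; rewrite !inE.
by rewrite subn0 -[in RHS](card_ord r) -cardsT; apply: eq_card => i; rewrite !inE.
Qed.

Lemma card_leaves_differ (a a' : option 'I_r) :
  #|[set i | (Some i == a) != (Some i == a')]| = (a != a') * ((a != None) + (a' != None)).
Proof.
case: a a' => [i|] [j|]; rewrite ?(inj_eq Some_inj) /=.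
- have [<- | ij] := eqVneq i j.
    by apply/eqP; rewrite cards_eq0; apply/eqP/setP => k; rewrite !inE eqxx.
  rewrite (eq_card (B := [set i; j])) ?cards2 ?ij // => k.
  rewrite !inE !(inj_eq Some_inj); case: (eqVneq k i) => [-> | _]; last by case: (k == j).
  by case: eqVneq ij.
- rewrite (eq_card (B := [set i])) ?cards1 // => k.
  by rewrite !inE (inj_eq Some_inj) /=; case: (k == i).
- rewrite (eq_card (B := [set j])) ?cards1 // => k.
  by rewrite !inE (inj_eq Some_inj) /=; case: (k == j).
- by apply/eqP; rewrite cards_eq0; apply/eqP/setP => k; rewrite !inE.
Qed.

Lemma card_symdiff_star_zfset p q :
  #|symdiff (star_zfset p) (star_zfset q)|
    = (p.2 != q.2) + (p.1 != q.1) * ((p.1 != None) + (q.1 != None)).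
Proof.
rewrite card_option_set in_symdiff !inE /= -card_leaves_differ; congr (_ + _).
apply: eq_card => i; rewrite !inE.
by case: (Some i == p.1); case: (Some i == q.1).
Qed.

Lemma card_symdiff_star_zfset_eq1 p q :
  (#|symdiff (star_zfset p) (star_zfset q)| == 1) = cartprod K K2 p q.
Proof.
rewrite card_symdiff_star_zfset /cartprod /K2 /star.
case: p q => [[i|] b] [[j|] b'] /=; rewrite ?(inj_eq Some_inj).
- by case: (eqVneq i j); case: b; case: b'.
all: by case: b; case: b'.
Qed.

Definition star_zfvert p : TARv K := exist _ (star_zfset p) (zero_forcing_star_zfset p).

Definition star_vcode (S : TARv K) : option 'I_r * bool := star_code (val S).

Lemma star_zfvertK : cancel star_zfvert star_vcode.
Proof. exact: star_zfsetK. Qed.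

Lemma star_vcodeK : cancel star_vcode star_zfvert.
Proof. by move=> S; apply: val_inj; exact: star_codeK (valP S). Qed.

Lemma card_star_vert (S : TARv K) : #|val S| = star_zfcard (star_vcode S).
Proof. by rewrite -card_star_zfset -[in LHS](star_vcodeK S). Qed.

Lemma TAR_rel_star (S S' : TARv K) :
  TAR_rel K S S' = cartprod K K2 (star_vcode S) (star_vcode S').
Proof.
by rewrite -card_symdiff_star_zfset_eq1 -[in LHS](star_vcodeK S) -[in LHS](star_vcodeK S').
Qed.

Lemma TAR_star_isomorphic : isomorphic (TAR_rel K) (cartprod K K2).
Proof.
exists star_vcode; split; last exact: TAR_rel_star.
exact: Bijective star_vcodeK star_zfvertK.
Qed.

Lemma star_zfcard_ge p : r - 1 <= star_zfcard p.
Proof. by case: p => [[?|] []]; rewrite /star_zfcard /=; lia. Qed.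

Lemma zero_forcing_star_card (S : {set V}) : zero_forcing K S -> r - 1 <= #|S|.
Proof. by move=> zfS; rewrite -(star_codeK zfS) card_star_zfset star_zfcard_ge. Qed.

Lemma Zn_star : Zn K = r - 1.
Proof.
have witness := zero_forcing_star_zfset (Some leaf0, false).
rewrite /Zn (bigmin_eq witness) ?card_star_zfset //.
- by move=> S /zero_forcing_star_card.
- by rewrite /star_zfcard card_option card_ord /=; lia.
Qed.

Lemma minset_star_card (S : {set V}) : minset (zero_forcing K) S -> #|S| = r - 1.
Proof.
case/minsetP => zfS; rewrite -(star_codeK zfS); case: (star_code S) => a b minS.
have sub : star_zfset (Some (odflt leaf0 a), false) \subset star_zfset (a, b).
  by apply/subsetP => -[i|]; rewrite !inE //; case: a {minS}.
by rewrite -(minS _ (zero_forcing_star_zfset _) sub) card_star_zfset.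
Qed.

Lemma Zbar_star : Zbar K = r - 1.
Proof.
have [S minS _] := minset_exists (zero_forcing_star_zfset (None, true)).
apply/eqP; rewrite eqn_leq; apply/andP; split.
  by apply/bigmax_leqP => T /minset_star_card ->.
by rewrite -(minset_star_card minS); apply: leq_bigmax_cond.
Qed.

Lemma TARk_connected_star_ge k : r <= k -> TARk_connected K k.
Proof.
move=> le_rk; set P := fun S : TARv K => #|val S| <= k.
set R := fun x y => [&& P x, P y & TAR_rel K x y].
have edge p q : star_zfcard p <= k -> star_zfcard q <= k -> cartprod K K2 p q ->
    connect R (star_zfvert p) (star_zfvert q).
  move=> pk qk pq; apply: connect1.
  by rewrite /R /P !card_star_vert TAR_rel_star !star_zfvertK pk qk pq.
apply: (induced_connected_hub (c := star_zfvert (None, false))).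
- by move=> S S'; rewrite /TAR_rel /symdiff setUC.
- by rewrite /P card_star_vert star_zfvertK /star_zfcard /= subn0.
move=> S; rewrite /P card_star_vert -{2}(star_vcodeK S).
case: (star_vcode S) => a b ab_k.
have a_k : star_zfcard (a, false) <= k by rewrite /star_zfcard /=; lia.
have a_hub : connect R (star_zfvert (a, false)) (star_zfvert (None, false)).
  case: a {ab_k} a_k => [i|] a_k; last exact: connect0.
  by apply: edge => //; rewrite /star_zfcard /=; lia.
case: b ab_k => ab_k; last exact: a_hub.
by apply: connect_trans a_hub; apply: edge; rewrite /cartprod ?eqxx.
Qed.

Lemma TARk_connected_star_lt k : k < r -> ~~ TARk_connected K k.
Proof.
move=> lt_kr; set P := fun S : TARv K => #|val S| <= k.
have [/existsP [S0 PS0] | none] := boolP [exists S, P S]; last first.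
  by rewrite /TARk_connected /induced_connected (negbTE none).
have le_r1k : r - 1 <= k.
  by move: PS0; rewrite /P card_star_vert; exact/leq_trans/star_zfcard_ge.
have leaf_small i : P (star_zfvert (Some i, false)).
  by rewrite /P card_star_vert star_zfvertK /star_zfcard.
apply: (induced_disconnected_isolated (leaf_small leaf0) (leaf_small leaf1)).
  by rewrite (can_eq star_zfvertK).
move=> S; rewrite /P card_star_vert TAR_rel_star star_zfvertK.
case: (star_vcode S) => [[j|] []]; rewrite /star_zfcard /cartprod /K2 /star /= ?andbF //.
all: by move=> ?; exfalso; lia.
Qed.

Lemma TARk_connected_star k : TARk_connected K k = (r <= k).
Proof.
have [/TARk_connected_star_ge // | /TARk_connected_star_lt] := leqP r k.
exact: negbTE.
Qed.

Lemma z0_low_star : z0_low K = r.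
Proof.
rewrite /z0_low (eq_bigl (fun k : 'I__ => r <= k)) => [|k]; last exact: TARk_connected_star.
by rewrite bigmin_ord_ge // card_option card_ord // ltnW.
Qed.

Lemma z0_star : z0 K = r.
Proof.
rewrite /z0 (eq_bigl (fun k : 'I__ => r <= k)) => [|k].
  by rewrite bigmin_ord_ge // card_option card_ord // ltnW.
apply/forallP/idP => [/(_ k) | le_rk i]; first by rewrite leqnn TARk_connected_star.
by rewrite TARk_connected_star; apply/implyP/leq_trans.
Qed.

End Star.

Theorem proposition1p5 (r : nat) (hr : 2 <= r) :
  isomorphic (TAR_rel (star r)) (cartprod (star r) K2) /\
  Zbar (star r) = r - 1 /\ Zn (star r) = r - 1 /\
  z0 (star r) = r /\ z0_low (star r) = r.
Proof.
split; first exact: TAR_star_isomorphic hr.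
by rewrite Zbar_star // Zn_star // z0_star // z0_low_star.
Qed.
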